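(* The set of covectors $\mathcal L$ of a finitary affine oriented matroid $(E,\mathcal L)$ is countable.
   Context: A sign vector on a set $E$ is an element of $\{+,-,0\}^E$; $-X$ is defined by $(-X)(e)=-X(e)$. The zero set is $z(X)=\{e:X(e)=0\}$. The separator of $X,Y$ is $S(X,Y)=\{e\in E: X(e)\neq0\neq Y(e),\ X(e)\neq Y(e)\}$. The composition $X\circ Y$ is given by $(X\circ Y)(e)=X(e)$ if $X(e)\neq0$ and $Y(e)$ otherwise; $X\oplus Y$ is $0$ on $S(X,Y)$ and equals $X\circ Y$ elsewhere. For sets of sign vectors, $\mathcal A\circ\mathcal B=\{X\circ Y:X\in\mathcal A,Y\in\mathcal B\}$, $-\mathcal A=\{-X:X\in\mathcal A\}$. Sign vectors are partially ordered componentwise via $0<+$, $0<-$ ($+$ and $-$ incomparable). For $\mathcal L\subseteq\{+,-,0\}^E$ let $I_e(X,Y;\mathcal L)=\{Z\in\mathcal L:Z(e)=0,\ Z(f)=(X\circ Y)(f)\ \forall f\notin S(X,Y)\}$, $I(X,Y;\mathcal L)=\bigcup_{e\in S(X,Y)}I_e(X,Y;\mathcal L)$ and $\mathcal P(\mathcal L)=\{X\oplus(-Y):X,Y\in\mathcal L,\ I(X,-Y;\mathcal L)=I(-X,Y;\mathcal L)=\emptyset\}$. A finitary affine oriented matroid (FAOM) is a pair $(E,\mathcal L)$, $\mathcal L\subseteq\{+,-,0\}^E$, satisfying (S) $|S(X,Y)|<\infty$ for $X,Y\in\mathcal L$; (Z) $|z(X)|<\infty$ for $X\in\mathcal L$;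 (I) $\{Y\in\mathcal L:Y\le X\}$ is finite for each $X\in\mathcal L$; (FS) $\mathcal L\circ(-\mathcal L)\subseteq\mathcal L$; (SE) for all $X,Y\in\mathcal L$ and $e\in S(X,Y)$, $I_e(X,Y;\mathcal L)\ne\emptyset$; (P) $\mathcal P(\mathcal L)\circ\mathcal L\subseteq\mathcal L$. *)

From Stdlib Require Import List.
Import ListNotations.
Set Implicit Arguments.

Inductive sign : Type := Plus | Minus | Zero.

Definition sopp (s : sign) : sign :=
  match s with Plus => Minus | Minus => Plus | Zero => Zero end.

Definition signvec (E : Type) := E -> sign.

Definition svneg {E : Type} (X : signvec E) : signvec E := fun e => sopp (X e).

Definition zeroset {E : Type} (X : signvec E) : E -> Prop := fun e => X e = Zero.

Definition sep {E : Type} (X Y : signvec E) : E -> Prop :=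
  fun e => X e <> Zero /\ Y e <> Zero /\ X e <> Y e.

Definition comp {E : Type} (X Y : signvec E) : signvec E :=
  fun e => match X e with Zero => Y e | s => s end.

(* X (+) Y : 0 on S(X,Y), X o Y elsewhere *)
Definition oplus {E : Type} (X Y : signvec E) : signvec E :=
  fun e => match X e, Y e with
           | Plus, Minus => Zero
           | Minus, Plus => Zero
           | Zero, t => t
           | s, _ => s
           end.

Definition svle {E : Type} (X Y : signvec E) : Prop :=
  forall e, X e = Zero \/ X e = Y e.

Definition finite_set {E : Type} (A : E -> Prop) : Prop :=
  exists l : list E, forall e, A e -> In e l.

Definition finite_svset {E : Type} (A : signvec E -> Prop) : Prop :=
  exists l : list (signvec E), forall X, A X -> In X l.

Definition Ie {E : Type} (L : signvec E -> Prop) (X Y : signvec E) (e : E)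
  : signvec E -> Prop :=
  fun Z => L Z /\ Z e = Zero /\ (forall f, ~ sep X Y f -> Z f = comp X Y f).

Definition Iset {E : Type} (L : signvec E -> Prop) (X Y : signvec E)
  : signvec E -> Prop :=
  fun Z => exists e, sep X Y e /\ Ie L X Y e Z.

Definition Pset {E : Type} (L : signvec E -> Prop) : signvec E -> Prop :=
  fun W => exists X Y, L X /\ L Y /\
     (forall Z, ~ Iset L X (svneg Y) Z) /\
     (forall Z, ~ Iset L (svneg X) Y Z) /\
     W = oplus X (svneg Y).

Definition FAOM (E : Type) (L : signvec E -> Prop) : Prop :=
  (* (S) *) (forall X Y, L X -> L Y -> finite_set (sep X Y)) /\
  (* (Z) *) (forall X, L X -> finite_set (zeroset X)) /\
  (* (I) *) (forall X, L X -> finite_svset (fun Y => L Y /\ svle Y X)) /\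
  (* (FS) *) (forall X Y, L X -> L Y -> L (comp X (svneg Y))) /\
  (* (SE) *) (forall X Y e, L X -> L Y -> sep X Y e -> exists Z, Ie L X Y e Z) /\
  (* (P) *) (forall W Y, Pset L W -> L Y -> L (comp W Y)).

Definition countable_svset {E : Type} (L : signvec E -> Prop) : Prop :=
  exists f : {X : signvec E | L X} -> nat,
    forall x y, f x = f y -> x = y.

From Stdlib Require Import List Classical ClassicalEpsilon FunctionalExtensionality
  ProofIrrelevance Relations Cantor Lia.
Import ListNotations.
Set Implicit Arguments.

(* Call two covectors adjacent when they are comparable in the order on sign
   vectors.  Two facts about this graph on L suffice:
   - it is locally finite: the covectors above X agree with X outside the
     finite zero set z(X), so there are finitely many of them, and by (I)
     there are finitely many below X;
   - it is connected: if e separates X and Y, strong elimination (SE) gives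
     Z in I_e(X,Y;L), and S(X,Z), S(Z,Y) are strictly smaller than the finite
     separator S(X,Y); when S(X,Y) is empty, X <= X o Y >= Y.
   A connected locally finite graph is countable: every vertex lies in one of
   the finite balls around a fixed vertex, and a sequence of finite lists
   can be enumerated along the Cantor pairing of nat * nat. *)

Definition classic_eq_dec {A : Type} (x y : A) : {x = y} + {x <> y} :=
  excluded_middle_informative (x = y).

Section CountableGraph.

Variable T : Type.

Lemma injects_into_nat_of_enumeration (P : T -> Prop) (g : nat -> option T) :
  (forall x, P x -> exists k, g k = Some x) ->
  exists f : {x : T | P x} -> nat, forall x y, f x = f y -> x = y.
Proof.
  intros Hcover.
  assert (Hcode : forall x : {x : T | P x}, exists k, g k = Some (proj1_sig x))
    by (intros [x Hx]; exact (Hcover x Hx)).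
  exists (fun x => proj1_sig (constructive_indefinite_description _ (Hcode x))).
  intros x y.
  destruct (constructive_indefinite_description _ (Hcode x)) as [kx Hx].
  destruct (constructive_indefinite_description _ (Hcode y)) as [ky Hy].
  simpl; intros <-.
  rewrite Hx in Hy; injection Hy.
  destruct x as [x px], y as [y py]; simpl; intros <-.
  f_equal; apply proof_irrelevance.
Qed.

Lemma injects_into_nat_of_lists (P : T -> Prop) (B : nat -> list T) :
  (forall x, P x -> exists n, In x (B n)) ->
  exists f : {x : T | P x} -> nat, forall x y, f x = f y -> x = y.
Proof.
  intros Hcover.
  apply injects_into_nat_of_enumeration
    with (g := fun k => nth_error (B (fst (of_nat k))) (snd (of_nat k))).
  intros x Hx.
  destruct (Hcover x Hx) as [n Hn].
  destruct (In_nth_error _ _ Hn) as [i Hi].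
  exists (to_nat (n, i)); rewrite cancel_of_to; exact Hi.
Qed.

Variable adj : relation T.
Hypothesis locally_finite : forall x, exists l, forall y, adj x y -> In y l.

Definition neighbours (x : T) : list T :=
  proj1_sig (constructive_indefinite_description _ (locally_finite x)).

Lemma neighbours_spec x y : adj x y -> In y (neighbours x).
Proof.
  unfold neighbours.
  destruct (constructive_indefinite_description _ (locally_finite x)); simpl; auto.
Qed.

Fixpoint ball (x0 : T) (n : nat) : list T :=
  match n with
  | 0 => [x0]
  | S n => flat_map neighbours (ball x0 n)
  end.

Lemma reachable_in_ball x0 y :
  clos_refl_trans _ adj x0 y -> exists n, In y (ball x0 n).
Proof.
  intros Hreach; apply clos_rt_rtn1 in Hreach.
  induction Hreach as [|y z Hyz _ [n Hn]].
  - exists 0; left; reflexivity.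
  - exists (S n); apply in_flat_map; exists y; auto using neighbours_spec.
Qed.

Lemma connected_locally_finite_countable (P : T -> Prop) (x0 : T) :
  (forall y, P y -> clos_refl_trans _ adj x0 y) ->
  exists f : {x : T | P x} -> nat, forall x y, f x = f y -> x = y.
Proof.
  intros Hconn.
  apply injects_into_nat_of_lists with (B := ball x0).
  intros y Hy; exact (reachable_in_ball (Hconn y Hy)).
Qed.

End CountableGraph.

Lemma agree_outside_finite {E : Type} (X : signvec E) (lz : list E) :
  exists l, forall Y, (forall e, ~ In e lz -> Y e = X e) -> In Y l.
Proof.
  induction lz as [|a lz [l Hl]].
  - exists [X]; intros Y HY; left.
    apply functional_extensionality; intro e; symmetry; apply HY; auto.
  - set (set_at := fun (Y : signvec E) (s : sign) (e : E) =>
                     if classic_eq_dec e a then s else Y e).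
    exists (flat_map (fun Z => [set_at Z Plus; set_at Z Minus; set_at Z Zero]) l).
    intros Y HY; apply in_flat_map; exists (set_at Y (X a)); split.
    + apply Hl; intros e He; unfold set_at.
      destruct (classic_eq_dec e a) as [->|Hne]; auto.
      apply HY; intros [->|He']; auto.
    + assert (Hrestore : Y = set_at (set_at Y (X a)) (Y a)).
      { apply functional_extensionality; intro e; unfold set_at.
        destruct (classic_eq_dec e a) as [->|]; reflexivity. }
      destruct (Y a); rewrite Hrestore at 1; simpl; auto.
Qed.

Section FAOMConnectivity.

Variable E : Type.
Variable L : signvec E -> Prop.
Hypothesis HL : FAOM L.

Definition comparable (X Y : signvec E) : Prop :=
  L X /\ L Y /\ (svle X Y \/ svle Y X).

(* (FS) implies closure under composition: X o Y = X o -(X o -Y). *)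
Lemma comp_closed X Y : L X -> L Y -> L (comp X Y).
Proof.
  destruct HL as (_ & _ & _ & HFS & _).
  intros HX HY.
  replace (comp X Y) with (comp X (svneg (comp X (svneg Y)))) by
    (apply functional_extensionality; intro e; unfold comp, svneg;
     destruct (X e), (Y e); reflexivity).
  apply HFS; auto.
Qed.

(* Without separating elements, X <= X o Y >= Y. *)
Lemma unseparated_connected X Y :
  L X -> L Y -> (forall e, ~ sep X Y e) -> clos_refl_trans _ comparable X Y.
Proof.
  intros HX HY Hnosep.
  apply rt_trans with (comp X Y); apply rt_step;
    repeat split; auto using comp_closed.
  - left; intro e; unfold comp; destruct (X e); auto.
  - right; intro e; specialize (Hnosep e); unfold sep, comp in *.
    destruct (X e), (Y e); auto; exfalso; apply Hnosep; repeat split; discriminate.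
Qed.

Lemma eliminant_sep_left X Y e Z f :
  Ie L X Y e Z -> sep X Z f -> sep X Y f /\ f <> e.
Proof.
  intros (_ & HZe & HZf) Hf; split.
  - apply NNPP; intro Hnf; unfold sep in Hf; rewrite (HZf f Hnf) in Hf.
    unfold comp in Hf; destruct (X f); intuition.
  - intros ->; unfold sep in Hf; intuition.
Qed.

Lemma eliminant_sep_right X Y e Z f :
  Ie L X Y e Z -> sep Z Y f -> sep X Y f /\ f <> e.
Proof.
  intros (_ & HZe & HZf) Hf; split.
  - apply NNPP; intro Hnf; apply Hnf.
    unfold sep in Hf; rewrite (HZf f Hnf) in Hf; unfold sep, comp in *.
    destruct (X f), (Y f); intuition.
  - intros ->; unfold sep in Hf; intuition.
Qed.

(* Induction on the size of a list covering the separator. *)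
Lemma connected_bounded_sep n : forall X Y l,
  L X -> L Y -> (forall e, sep X Y e -> In e l) -> length l <= n ->
  clos_refl_trans _ comparable X Y.
Proof.
  destruct HL as (_ & _ & _ & _ & HSE & _).
  induction n as [|n IH]; intros X Y l HX HY Hcover Hlen.
  - apply unseparated_connected; auto; intros e He.
    destruct l; [destruct (Hcover e He)|simpl in Hlen; lia].
  - destruct (classic (exists e, sep X Y e)) as [[e He]|Hnosep].
    2: { apply unseparated_connected; eauto. }
    destruct (HSE X Y e HX HY He) as (Z & HZ).
    set (l' := remove classic_eq_dec e l).
    assert (Hshorter : length l' <= n)
      by (unfold l'; pose proof (remove_length_lt classic_eq_dec l e (Hcover e He)); lia).
    assert (Hcover' : forall f, sep X Y f /\ f <> e -> In f l')
      by (intros f [Hf Hne]; apply in_in_remove; auto).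
    apply rt_trans with Z.
    + apply (IH X Z l'); auto; [apply HZ|].
      intros f Hf; exact (Hcover' f (eliminant_sep_left HZ Hf)).
    + apply (IH Z Y l'); auto; [apply HZ|].
      intros f Hf; exact (Hcover' f (eliminant_sep_right HZ Hf)).
Qed.

Lemma comparable_connected X Y :
  L X -> L Y -> clos_refl_trans _ comparable X Y.
Proof.
  destruct HL as (HS & _).
  intros HX HY; destruct (HS X Y HX HY) as [l Hl].
  exact (connected_bounded_sep l HX HY Hl (le_n _)).
Qed.

Lemma comparable_locally_finite X :
  exists l, forall Y, comparable X Y -> In Y l.
Proof.
  destruct HL as (_ & HZ & HI & _).
  destruct (classic (L X)) as [HX|HX].
  2: { exists []; intros Y (HX' & _); contradiction. }
  destruct (HZ X HX) as [lz Hlz], (HI X HX) as [lbelow Hbelow].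
  destruct (agree_outside_finite X lz) as [labove Habove].
  exists (labove ++ lbelow); intros Y (_ & HY & [Hle|Hle]); apply in_or_app.
  - left; apply Habove; intros e He.
    destruct (Hle e) as [HXe|HXe]; auto.
    exfalso; apply He, Hlz; exact HXe.
  - right; apply Hbelow; auto.
Qed.

End FAOMConnectivity.

Theorem corollary3p7 (E : Type) (L : signvec E -> Prop) :
  FAOM L -> countable_svset L.
Proof.
  intros HL.
  destruct (classic (exists X, L X)) as [[X0 HX0]|Hempty].
  - apply (connected_locally_finite_countable (comparable_locally_finite HL))
      with (x0 := X0).
    intros Y HY; exact (comparable_connected HL X0 Y HX0 HY).
  - exists (fun _ => 0); intros [X HX]; exfalso; apply Hempty; eauto.
Qed.
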